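(* Let $q$ be an odd prime power of characteristic $p$, and let $\{x_k\}_{k\in[n]}$ be a family in $\mathbb{F}_{q^2}^d$. Consider the statements: (a) $\{x_k\}_{k\in[n]}$ is a projective $2$-design (i.e. an $(a,c_1,c_2)$-projective $2$-design for some $a,c_1,c_2\in\mathbb{F}_q$); (b) $n=d^2$; (c) there exist $a,b,c_1\in\mathbb{F}_q$ such that (i) $a^2\neq b$; (ii) if $a\neq0$ then $a^2-b=\frac{bc_1}{a}$; (iii) if $a=0$ then $d\equiv -1 \pmod p$; and (iv) $\{x_k\}_{k\in[n]}$ is an $(a,b,c_1)$-equiangular tight frame for $\mathbb{F}_{q^2}^d$. Any two of (a), (b), (c) together imply the third. Moreover, when (a), (b), (c) hold, $\{x_k\}_{k\in[n]}$ is an $(a,c_1,c_2)$-projective $2$-design with $c_2=2(a^2-b)$ (with $a,b,c_1$ as in (c)).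
   Context: For $a\in\mathbb{F}_{q^2}$ write $\overline{a}=a^q$; $A^*$ is conjugate transpose; $\langle x,y\rangle=x^*y$ on $\mathbb{F}_{q^2}^d$ and analogously on $(\mathbb{F}_{q^2}^d)^{\otimes 2}$. A subspace $V$ is nondegenerate if $V\cap V^\perp=\{0\}$. For nondegenerate $V$, a family $\{y_k\}_{k\in[n]}$ in $V$ is a $c$-tight frame for $V$ ($c\in\mathbb{F}_q$) if $\operatorname{span}\{y_k\}=V$ and $\sum_k\langle y_k,y\rangle y_k=cy$ for all $y\in V$. It is an $(a,b,c)$-equiangular tight frame ($a,b,c\in\mathbb{F}_q$) if moreover $\langle y_k,y_k\rangle=a$ for all $k$ and $\langle y_k,y_\ell\rangle\langle y_\ell,y_k\rangle=b$ for all $k\neq\ell$. $(\mathbb{F}_{q^2}^d)^{\otimes2}_{\mathrm{sym}}=\{\sum_{i,j}c_{ij}e_i\otimes e_j:c_{ij}=c_{ji}\}$ is nondegenerate with orthogonal projection $\Pi_d^{(2)}=\frac12\sum_{i,j}(e_ie_i^*\otimes e_je_j^*+e_ie_j^*\otimes e_je_i^* )$. A family $\{x_k\}_{k\in[n]}$ in $\mathbb{F}_{q^2}^d$ is an $(a,c_1,c_2)$-projective $2$-design if (i) $\langle x_k,x_k\rangle=a$ for all $k$, (ii) $\{x_k\}$ is a $c_1$-tight frame for $\mathbb{F}_{q^2}^d$, and (iii) $\{x_k\otimes x_k\}$ is a $c_2$-tight frame for $(\mathbb{F}_{q^2}^d)^{\otimes 2}_{\mathrm{sym}}$. Integers such as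 $d$ are viewed in $\mathbb{F}_q$ via reduction mod $p$. *)

From HB Require Import structures.
From mathcomp Require Import all_boot all_order all_algebra all_field.

Set Implicit Arguments. Unset Strict Implicit. Unset Printing Implicit Defensive.
Import GRing.Theory.
Local Open Scope ring_scope.

(* L plays the role of F_{q^2}; conjugation is a |-> a^q. *)
Definition qconj (L : finFieldType) (q : nat) (a : L) : L := a ^+ q.

Definition inFq (L : finFieldType) (q : nat) (a : L) : Prop := qconj q a = a.

Definition ipv (L : finFieldType) (q d : nat) (x y : 'cV[L]_d) : L :=
  \sum_(i < d) qconj q (x i 0) * y i 0.

(* (F_{q^2}^d)^{(x)2} is identified with d x d matrices via
   e_i (x) e_j |-> delta_mx i j, so x (x) y |-> x *m y^T and the
   inner product becomes sum_{i,j} conj(A i j) B i j. *)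
Definition ipm (L : finFieldType) (q d : nat) (A B : 'M[L]_d) : L :=
  \sum_(i < d) \sum_(j < d) qconj q (A i j) * B i j.

Definition tens2 (L : finFieldType) (d : nat) (x : 'cV[L]_d) : 'M[L]_d :=
  x *m x^T.

Definition symsub (L : finFieldType) (d : nat) : pred 'M[L]_d :=
  fun A => A^T == A.

Definition tight_frame (L : finFieldType) (q : nat) (V : lmodType L)
    (ip : V -> V -> L) (S : pred V) (n : nat) (y : 'I_n -> V) (c : L) : Prop :=
  [/\ inFq q c,
      (forall k, S (y k)),
      (forall v, S v <-> exists coef : 'I_n -> L, v = \sum_(k < n) coef k *: y k)
    & (forall v, S v -> \sum_(k < n) ip (y k) v *: y k = c *: v)].

Definition etf (L : finFieldType) (q d n : nat) (a b c : L)
    (y : 'I_n -> 'cV[L]_d) : Prop :=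
  [/\ inFq q a, inFq q b,
      tight_frame q (@ipv L q d) predT y c,
      (forall k, ipv q (y k) (y k) = a)
    & (forall k l, k != l -> ipv q (y k) (y l) * ipv q (y l) (y k) = b)].

Definition proj2design (L : finFieldType) (q d n : nat) (a c1 c2 : L)
    (x : 'I_n -> 'cV[L]_d) : Prop :=
  [/\ inFq q a,
      (forall k, ipv q (x k) (x k) = a),
      tight_frame q (@ipv L q d) predT x c1
    & tight_frame q (@ipm L q d) (@symsub L d) (fun k => tens2 (x k)) c2].

Definition condC (L : finFieldType) (q d n : nat) (a b c1 : L)
    (x : 'I_n -> 'cV[L]_d) : Prop :=
  [/\ inFq q a /\ inFq q b /\ inFq q c1,
      a ^+ 2 != b,
      (a != 0 -> a ^+ 2 - b = b * c1 / a),
      (a = 0 -> (d.+1)%:R = 0 :> L)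
    & etf q a b c1 x].

(* Write Pr k = x_k x_k^* and let Phi M = \sum_k tr (Pr k M) Pr k be the frame
   operator of the outer products on 'M_d, the matrix model of the tensors.
   Everything is obtained by comparing Phi with Psi h M = h (M + tr M I):
   - (a) with constant c2 holds exactly when Phi = Psi (c2 / 2); this is a
     computation with the 4-tensor T4 of the squares x_k (x) x_k;
   - (c) gives the Gram relations tr (Pr k Pr l) = (a^2 - b) delta_kl + b, so
     Pr (or, when a = 0, Pr with one member replaced by I) has a dual family
     for the trace pairing, whence n <= d^2, and Phi = Psi (a^2 - b) on it;
   - under (a), Psi (c2 / 2) is invertible up to multiples of I, so the same
     family spans 'M_d, whence n >= d^2; when n = d^2 it is a basis, and
     Phi = Psi (c2 / 2) on it yields the Gram relations of (c);
   - under (a) and (b), c2 != 0, for otherwise the squares would be totally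
     isotropic and n >= d (d + 1). *)

From HB Require Import structures.
From mathcomp Require Import all_boot all_order all_algebra all_field.
From mathcomp Require Import ring.

Set Implicit Arguments. Unset Strict Implicit. Unset Printing Implicit Defensive.
Import GRing.Theory.
Local Open Scope ring_scope.

Section DualFamilies.
Variable F : fieldType.

Lemma sum_enum (K : finType) (f : K -> F) :
  \sum_(k < #|K|) f (enum_val k) = \sum_k f k.
Proof. by rewrite (reindex enum_val (onW_bij _ (enum_val_bij K))). Qed.

Lemma sum_delta (I : finType) (a : I) (G : I -> F) :
  \sum_s G s * (s == a)%:R = G a.
Proof.
rewrite (bigD1 a) //= eqxx mulr1 big1 ?addr0 // => s /negbTE->; by rewrite mulr0.
Qed.

(* Vectors are functions K -> F, paired by <u, w> = \sum_k u k * w k.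
   Families u_i, w_j with <u_i, w_j> = delta_ij are independent, so
   there are at most dim F^K = #|K| of them. *)
Lemma card_le_of_dual (I K : finType) (u w : I -> K -> F) :
  (forall i j, \sum_k u i k * w j k = (i == j)%:R) -> (#|I| <= #|K|)%N.
Proof.
move=> uw.
pose U := \matrix_(i < #|I|, k < #|K|) u (enum_val i) (enum_val k).
pose W := \matrix_(k < #|K|, j < #|I|) w (enum_val j) (enum_val k).
have UW : U *m W = 1%:M.
  apply/matrixP=> i j; rewrite !mxE.
  under eq_bigr do rewrite !mxE.
  by rewrite (sum_enum (fun k => u (enum_val i) k * w (enum_val j) k)) uw
     (inj_eq enum_val_inj).
have := mxrankM_maxl U W; rewrite UW mxrank1 => rkU.
exact: leq_trans rkU (rank_leq_col U).
Qed.

Lemma coef_eq0_of_spanning (K : finType) n (G : 'I_n -> K -> F)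
    (co : (K -> F) -> 'I_n -> F) : n = #|K| ->
  (forall v k, v k = \sum_m co v m * G m k) ->
  forall al : 'I_n -> F, (forall k, \sum_m al m * G m k = 0) -> forall m, al m = 0.
Proof.
move=> nK; subst n => span al al0 m.
pose Gm := \matrix_(m < #|K|, k < #|K|) G m (enum_val k).
pose B := \matrix_(k0 < #|K|, m < #|K|) co (fun k => (enum_val k0 == k)%:R) m.
have BG : B *m Gm = 1%:M.
  apply/matrixP=> i j; rewrite !mxE.
  under eq_bigr do rewrite !mxE.
  by rewrite -(span (fun k => (enum_val i == k)%:R)) (inj_eq enum_val_inj).
pose a := \row_m al m.
have aG : a *m Gm = 0.
  by apply/matrixP=> i j; rewrite !mxE; under eq_bigr do rewrite !mxE; exact: al0.
have : a = 0 by rewrite -[a]mulmx1 -(mulmx1C BG) mulmxA aG mul0mx.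
by move/matrixP/(_ 0 m); rewrite !mxE.
Qed.

Lemma expansion_of_dual (K : finType) n (G H : 'I_n -> K -> F) : n = #|K| ->
  (forall i j, \sum_k G i k * H j k = (i == j)%:R) ->
  forall (v : K -> F) k, v k = \sum_m (\sum_k' v k' * H m k') * G m k.
Proof.
move=> nK; subst n => GH v k.
pose Gm := \matrix_(m < #|K|, k < #|K|) G m (enum_val k).
pose Hm := \matrix_(k < #|K|, m < #|K|) H m (enum_val k).
have GHm : Gm *m Hm = 1%:M.
  apply/matrixP=> i j; rewrite !mxE.
  under eq_bigr do rewrite !mxE.
  by rewrite (sum_enum (fun k => G i k * H j k)) GH.
pose a := \row_(k < #|K|) v (enum_val k).
have : a = a *m Hm *m Gm by rewrite -mulmxA (mulmx1C GHm) mulmx1.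
move/matrixP/(_ 0 (enum_rank k)); rewrite !mxE enum_rankK => ->.
apply: eq_bigr => m _; rewrite !mxE enum_rankK; congr (_ * _).
rewrite -(sum_enum (fun k' => v k' * H m k')).
by apply: eq_bigr => i _; rewrite !mxE.
Qed.

(* If two families u_s, v_s pair against u'_t, v'_t by
   <u_s, u'_t> = 0, <v_s, u'_t> = delta_st and <u_s, v'_t> = delta_st,
   then the 2 #|I| vectors u_s, v_s are independent. *)
Lemma card_le_of_isotropic_pairing (I K : finType) (u v u' v' : I -> K -> F) :
  (forall s t, \sum_k u s k * u' t k = 0) ->
  (forall s t, \sum_k v s k * u' t k = (s == t)%:R) ->
  (forall s t, \sum_k u s k * v' t k = (s == t)%:R) ->
  (#|I| + #|I| <= #|K|)%N.
Proof.
move=> uu' vu' uv'.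
pose X t k := v' t k - \sum_s (\sum_k' v s k' * v' t k') * u' s k.
have uX s t : \sum_k u s k * X t k = (s == t)%:R.
  rewrite -uv'; under eq_bigr do rewrite mulrBr mulr_sumr.
  rewrite sumrB exchange_big /=; apply/eqP; rewrite subr_eq addrC -subr_eq subrr.
  apply/eqP/esym; apply: big1 => s' _.
  by under eq_bigr do rewrite mulrCA; rewrite -mulr_sumr uu' mulr0.
have vX s t : \sum_k v s k * X t k = 0.
  under eq_bigr do rewrite mulrBr mulr_sumr.
  rewrite sumrB exchange_big /=.
  under [X in _ - X]eq_bigr do under eq_bigr do rewrite mulrCA.
  under [X in _ - X]eq_bigr do rewrite -mulr_sumr vu' eq_sym.
  by rewrite (sum_delta s) subrr.
pose R i := match i with inl s => u s | inr s => v s end.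
pose C j := match j with inl t => X t | inr t => u' t end.
have := @card_le_of_dual _ _ R C.
by rewrite card_sum; apply=> [[s|s] [t|t]] /=; rewrite ?uX ?uu' ?vX ?vu'.
Qed.

End DualFamilies.

Section MatrixFamilies.
Variables (F : fieldType) (d n : nat).

Definition spans (Q : 'I_n -> 'M[F]_d) : Prop :=
  exists co : 'M[F]_d -> 'I_n -> F, forall M, M = \sum_m co M m *: Q m.

Definition dual_family (Q : 'I_n -> 'M[F]_d) : Prop :=
  exists W : 'I_n -> 'M[F]_d, forall i j, \tr (Q i *m W j) = (i == j)%:R.

(* Coordinates of 'M_d are indexed by pairs, and the trace pairing is the
   standard pairing of coordinate vectors, so the lemmas above apply. *)
Lemma card_pairs : #|{: 'I_d * 'I_d}| = (d * d)%N.
Proof. by rewrite card_prod card_ord. Qed.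

Lemma sum_scale_entry (Q : 'I_n -> 'M[F]_d) (al : 'I_n -> F) i j :
  (\sum_m al m *: Q m) i j = \sum_m al m * Q m i j.
Proof. by rewrite summxE; apply: eq_bigr => m _; rewrite mxE. Qed.

Lemma mxtrace_mul_pairs (A B : 'M[F]_d) :
  \tr (A *m B) = \sum_(k : 'I_d * 'I_d) A k.1 k.2 * B k.2 k.1.
Proof.
rewrite -(pair_bigA _ (fun i j => A i j * B j i)).
by apply: eq_bigr => i _; rewrite mxE.
Qed.

Lemma card_le_of_dual_family Q : dual_family Q -> (n <= d * d)%N.
Proof.
case=> W QW; rewrite -card_pairs -[n]card_ord.
apply: (@card_le_of_dual _ _ _ (fun i k => Q i k.1 k.2) (fun j k => W j k.2 k.1)).
by move=> i j; rewrite -mxtrace_mul_pairs QW.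
Qed.

Lemma card_ge_of_spans Q : spans Q -> (d * d <= n)%N.
Proof.
case=> co span; rewrite -card_pairs -[n]card_ord.
apply: (@card_le_of_dual _ _ _ (fun (k : 'I_d * 'I_d) m => co (delta_mx k.1 k.2) m)
   (fun k m => Q m k.1 k.2)).
move=> [i1 i2] [j1 j2] /=.
have := congr1 (fun M : 'M_d => M j1 j2) (span (delta_mx i1 i2)).
by rewrite sum_scale_entry mxE xpair_eqE [i1 == j1]eq_sym [i2 == j2]eq_sym => ->.
Qed.

Lemma spans_of_dual_family Q : n = (d * d)%N -> dual_family Q -> spans Q.
Proof.
move=> nd [W QW]; rewrite -card_pairs in nd.
have expand := @expansion_of_dual _ _ _ (fun i k => Q i k.1 k.2) (fun j k => W j k.2 k.1)
  nd (fun i j => etrans (esym (mxtrace_mul_pairs _ _)) (QW i j)).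
exists (fun M m => \tr (M *m W m)) => M; apply/matrixP => i j.
rewrite (expand (fun k => M k.1 k.2) (i, j)) /= sum_scale_entry.
by apply: eq_bigr => m _; rewrite mxtrace_mul_pairs.
Qed.

Lemma coef_eq0_of_spans Q : n = (d * d)%N -> spans Q ->
  forall al : 'I_n -> F, \sum_m al m *: Q m = 0 -> forall m, al m = 0.
Proof.
move=> nd [co span] al al0; rewrite -card_pairs in nd.
apply: (@coef_eq0_of_spanning _ _ _ (fun m k => Q m k.1 k.2)
  (fun v => co (\matrix_(i, j) v (i, j))) nd).
  move=> v [i j] /=.
  have := congr1 (fun M : 'M_d => M i j) (span (\matrix_(i, j) v (i, j))).
  by rewrite sum_scale_entry mxE => ->.
by move=> [i j] /=; have := congr1 (fun M : 'M_d => M i j) al0; rewrite sum_scale_entry mxE.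
Qed.

Lemma scalar1_inj (a b : F) : (0 < d)%N -> a *: (1%:M : 'M[F]_d) = b *: 1%:M -> a = b.
Proof.
by move=> d_gt0 /matrixP /(_ (Ordinal d_gt0) (Ordinal d_gt0)); rewrite !mxE eqxx !mulr1.
Qed.

End MatrixFamilies.

Section FiniteField.
Variables (L : finFieldType) (q : nat).
Hypotheses (cardL : #|L| = (q ^ 2)%N) (odd_q : odd q).

Local Notation cj := (@qconj L q).

Lemma pchar_odd_power : exists p, [/\ p \in [pchar L], p != 2%N & [pchar L].-nat q].
Proof.
have [p p_pr pcharLp] := finPcharP L.
have cardLp : #|L| = (p ^ logn p #|L|)%N by exact: card_pprimeChar pcharLp.
have : (q %| p ^ logn p #|L|)%N by rewrite -cardLp cardL dvdn_exp.
case/(dvdn_pfactor _ _ p_pr) => j _ qE.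
exists p; split => //.
  apply/eqP => p2; move: odd_q; rewrite qE p2 oddX orbF => /eqP j0.
  by have := finNzRing_gt1 L; rewrite cardL qE p2 j0.
by rewrite (eq_pnat _ (pcharf_eq pcharLp)) qE pnatX pnat_id.
Qed.

Lemma qconjD a b : cj (a + b) = cj a + cj b.
Proof. by have [p [pcharLp _ q_p]] := pchar_odd_power; exact: exprDn_pchar. Qed.

Lemma qconjM a b : cj (a * b) = cj a * cj b.
Proof. exact: exprMn. Qed.

Lemma qconj0 : cj 0 = 0.
Proof. by rewrite /qconj expr0n; case: q odd_q. Qed.

Lemma qconjN a : cj (- a) = - cj a.
Proof. by rewrite /qconj exprNn -signr_odd odd_q expr1 mulN1r. Qed.

Lemma qconjK a : cj (cj a) = a.
Proof. by rewrite /qconj -exprM mulnn -cardL expf_card. Qed.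

Lemma qconjV a : cj a^-1 = (cj a)^-1.
Proof. exact: exprVn. Qed.

Lemma qconj_nat k : cj k%:R = k%:R.
Proof.
elim: k => [|k IHk]; first exact: qconj0.
by rewrite -addn1 natrD qconjD IHk /qconj expr1n.
Qed.

Lemma qconj_sum (I : Type) (r : seq I) (P : pred I) (F : I -> L) :
  cj (\sum_(i <- r | P i) F i) = \sum_(i <- r | P i) cj (F i).
Proof. exact: (big_morph cj qconjD qconj0). Qed.

Lemma qconj_eq0 a : (cj a == 0) = (a == 0).
Proof. by rewrite /qconj expf_eq0; case: q odd_q. Qed.

Lemma two_neq0 : (2%:R : L) != 0.
Proof.
have [p [pcharLp p2 _]] := pchar_odd_power; apply/negP => /eqP two0.
have : (2%N \in [pchar L]) by rewrite inE /= two0 eqxx.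
by rewrite (pcharf_eq pcharLp) inE eq_sym (negbTE p2).
Qed.

Lemma inFqM (a b : L) : inFq q a -> inFq q b -> inFq q (a * b).
Proof. by rewrite /inFq qconjM => -> ->. Qed.

Lemma inFqN (a : L) : inFq q a -> inFq q (- a).
Proof. by rewrite /inFq qconjN => ->. Qed.

Lemma inFqB (a b : L) : inFq q a -> inFq q b -> inFq q (a - b).
Proof. by rewrite /inFq qconjD qconjN => -> ->. Qed.

Lemma inFqV (a : L) : inFq q a -> inFq q a^-1.
Proof. by rewrite /inFq qconjV => ->. Qed.

Lemma inFq_nat k : inFq q (k%:R : L).
Proof. exact: qconj_nat. Qed.

Section FrameOperator.
Variables (d n : nat) (x : 'I_n -> 'cV[L]_d).

Definition Pr m : 'M[L]_d := \matrix_(i, j) (x m i 0 * cj (x m j 0)).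

Definition Phi (M : 'M[L]_d) : 'M[L]_d := \sum_m \tr (Pr m *m M) *: Pr m.

(* The frame operator of a 2-design: M |-> h (M + tr M I). *)
Definition Psi (h : L) (M : 'M[L]_d) : 'M[L]_d := h *: (M + \tr M *: 1%:M).

Lemma mxtrace_mulE (A B : 'M[L]_d) : \tr (A *m B) = \sum_i \sum_j A i j * B j i.
Proof. by apply: eq_bigr => i _; rewrite mxE. Qed.

Lemma tr_Pr m : \tr (Pr m) = ipv q (x m) (x m).
Proof. by apply: eq_bigr => i _; rewrite mxE mulrC. Qed.

Lemma tr_PrPr k l : \tr (Pr k *m Pr l) = ipv q (x k) (x l) * ipv q (x l) (x k).
Proof.
rewrite mxtrace_mulE /ipv mulrC big_distrl /=; apply: eq_bigr => i _.
by rewrite big_distrr /=; apply: eq_bigr => j _; rewrite !mxE /qconj; ring.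
Qed.

Lemma sum_Pr_of_frame c : tight_frame q (@ipv L q d) predT x c ->
  \sum_k Pr k = c *: 1%:M.
Proof.
case=> _ _ _ frame; apply/matrixP => i j.
have := congr1 (fun M : 'cV_d => M i 0) (frame (delta_mx j 0) isT).
rewrite summxE !mxE eqxx andbT /= => <-.
rewrite summxE; apply: eq_bigr => k _; rewrite !mxE mulrC; congr (_ * _).
rewrite /ipv (bigD1 j) //= big1 ?addr0; first by rewrite mxE !eqxx mulr1.
by move=> t /negbTE tj; rewrite mxE tj mulr0.
Qed.

Lemma Phi_lincomb (Q : 'I_n -> 'M[L]_d) (al : 'I_n -> L) :
  Phi (\sum_m al m *: Q m) = \sum_m al m *: Phi (Q m).
Proof.
rewrite /Phi.
under eq_bigr do rewrite mulmx_sumr raddf_sum scaler_suml.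
rewrite exchange_big /=; apply: eq_bigr => j _; rewrite scaler_sumr.
by apply: eq_bigr => m _; rewrite -scalemxAr mxtraceZ scalerA.
Qed.

Lemma Psi_lincomb h (Q : 'I_n -> 'M[L]_d) (al : 'I_n -> L) :
  Psi h (\sum_m al m *: Q m) = \sum_m al m *: Psi h (Q m).
Proof.
rewrite /Psi raddf_sum /= scaler_suml -big_split /= scaler_sumr.
by apply: eq_bigr => m _; rewrite mxtraceZ -scalerA -scalerDr !scalerA mulrC.
Qed.

Lemma Phi_eq_Psi_of_spans (Q : 'I_n -> 'M[L]_d) h : spans Q ->
  (forall m, Phi (Q m) = Psi h (Q m)) -> forall M, Phi M = Psi h M.
Proof.
move=> [co span] PhiQ M; rewrite (span M) Phi_lincomb Psi_lincomb.
by apply: eq_bigr => m _; rewrite PhiQ.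
Qed.

Lemma Phi1 : Phi 1%:M = \sum_m \tr (Pr m) *: Pr m.
Proof. by apply: eq_bigr => m _; rewrite mulmx1. Qed.

Lemma Psi1 h : Psi h 1%:M = (h * (d.+1)%:R) *: 1%:M.
Proof. by rewrite /Psi mxtrace1 -[X in X + _]scale1r -scalerDl scalerA -natr1 addrC. Qed.

(* Psi h is inverted by M |-> h^-1 (M - s I) up to a multiple of I. *)
Lemma Psi_shift h s M : h != 0 ->
  Psi h (h^-1 *: (M - s *: 1%:M)) = M + (\tr M - s * (d.+1)%:R) *: 1%:M.
Proof.
move=> h0.
have trN : \tr (h^-1 *: (M - s *: 1%:M)) = h^-1 * (\tr M - s * d%:R).
  by rewrite mxtraceZ linearB /= mxtraceZ mxtrace1.
by rewrite /Psi trN -natr1; apply/matrixP => i j; rewrite !mxE; field.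
Qed.

(* Tensor description of the frame operator of the squares x_m (x) x_m:
   T4 i j a b is the (ij, ab) entry of \sum_m (x_m (x) x_m)(x_m (x) x_m)^*,
   and sym_delta is twice the projection onto the symmetric tensors. *)
Definition T4 (i j a b : 'I_d) : L :=
  \sum_m x m i 0 * x m j 0 * (cj (x m a 0) * cj (x m b 0)).

Definition sym_delta (i j a b : 'I_d) : L :=
  (i == a)%:R * (j == b)%:R + (i == b)%:R * (j == a)%:R.

Lemma tens2E m i j : tens2 (x m) i j = x m i 0 * x m j 0.
Proof. by rewrite !mxE big_ord1 mxE. Qed.

Lemma delta_mxE (a b i j : 'I_d) : delta_mx a b i j = (i == a)%:R * (j == b)%:R :> L.
Proof. by rewrite mxE -natrM mulnb. Qed.

Lemma sum2_point (G : 'I_d -> 'I_d -> L) a b :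
  \sum_s \sum_t G s t * ((s == a)%:R * (t == b)%:R) = G a b.
Proof.
rewrite -(sum_delta a (fun s => G s b)); apply: eq_bigr => s _.
rewrite -(sum_delta b (fun t => G s t * (s == a)%:R)); apply: eq_bigr => t _.
by rewrite mulrA mulrAC.
Qed.

Lemma sum2_diag (G : 'I_d -> 'I_d -> L) :
  \sum_s \sum_t G s t * (s == t)%:R = \sum_s G s s.
Proof.
apply: eq_bigr => s _; rewrite -(sum_delta s (G s)).
by apply: eq_bigr => t _; rewrite eq_sym.
Qed.

Lemma Phi_entry M i j : Phi M i j = \sum_s \sum_t M t s * T4 i s j t.
Proof.
rewrite /Phi sum_scale_entry.
under eq_bigr do rewrite mxtrace_mulE big_distrl /= mxE.
rewrite exchange_big /=; apply: eq_bigr => s _.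
under eq_bigr do rewrite big_distrl /=.
rewrite exchange_big /=; apply: eq_bigr => t _.
by rewrite /T4 big_distrr /=; apply: eq_bigr => m _; rewrite !mxE /qconj; ring.
Qed.

Lemma Phi_of_T4 c2 : (forall i j a b, 2%:R * T4 i j a b = c2 * sym_delta i j a b) ->
  forall M, 2%:R *: Phi M = c2 *: (M + \tr M *: 1%:M).
Proof.
move=> T4E M; apply/matrixP => i j.
rewrite !mxE Phi_entry big_distrr /=.
under eq_bigr do rewrite big_distrr /=.
under eq_bigr do under eq_bigr do rewrite mulrCA T4E /sym_delta.
transitivity (c2 * (i == j)%:R * (\sum_s \sum_t M t s * (s == t)%:R)
   + c2 * (\sum_s \sum_t M t s * ((i == t)%:R * (s == j)%:R))).
  rewrite !mulr_sumr -big_split /=; apply: eq_bigr => s _.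
  by rewrite !mulr_sumr -big_split /=; apply: eq_bigr => t _; ring.
have -> : \sum_s \sum_t M t s * ((i == t)%:R * (s == j)%:R) = M i j.
  rewrite exchange_big /= -[RHS](sum2_point M i j); apply: eq_bigr => t _.
  by apply: eq_bigr => s _; rewrite eq_sym.
by rewrite sum2_diag /mxtrace; ring.
Qed.

Lemma T4_of_Phi c2 : (forall M, 2%:R *: Phi M = c2 *: (M + \tr M *: 1%:M)) ->
  forall i j a b, 2%:R * T4 i j a b = c2 * sym_delta i j a b.
Proof.
move=> PhiE i j a b.
have := congr1 (fun M : 'M_d => M i a) (PhiE (delta_mx b j)).
rewrite mxE [in RHS]mxE Phi_entry.
have -> : \sum_s \sum_t delta_mx b j t s * T4 i s a t = T4 i j a b.
  rewrite -[RHS](sum2_point (fun s t => T4 i s a t) j b); apply: eq_bigr => s _.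
  by apply: eq_bigr => t _; rewrite delta_mxE; ring.
have trd : \tr (delta_mx b j) = (b == j)%:R :> L.
  rewrite /mxtrace; under eq_bigr do rewrite delta_mxE.
  by rewrite (sum_delta j (fun k => (k == b)%:R)) eq_sym.
move=> ->; congr (_ * _).
rewrite trd !mxE -natrM mulnb /sym_delta [a == j]eq_sym [b == j]eq_sym.
by rewrite -!mulnb !natrM; ring.
Qed.

Lemma ipm_tens2 m V : ipm q (tens2 (x m)) V =
  \sum_a \sum_b cj (x m a 0) * cj (x m b 0) * V a b.
Proof.
by apply: eq_bigr => a _; apply: eq_bigr => b _; rewrite tens2E qconjM.
Qed.

(* The frame identity of the squares, tested on the symmetric tensors
   e_a (x) e_b + e_b (x) e_a, gives the tensor identity 2 T4 = c2 sym_delta. *)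
Lemma T4_of_sym_frame c2 :
  (forall V, symsub V -> \sum_m ipm q (tens2 (x m)) V *: tens2 (x m) = c2 *: V) ->
  forall i j a b, 2%:R * T4 i j a b = c2 * sym_delta i j a b.
Proof.
move=> frame i j a b.
pose V : 'M[L]_d := delta_mx a b + delta_mx b a.
have symV : symsub V by rewrite /symsub /V linearD /= !trmx_delta addrC.
have := congr1 (fun M : 'M_d => M i j) (frame V symV).
rewrite sum_scale_entry mxE /V mxE !delta_mxE -/(sym_delta i j a b) => <-.
rewrite /T4 mulr_sumr; apply: eq_bigr => m _; rewrite ipm_tens2.
under eq_bigr do under eq_bigr do rewrite mxE !delta_mxE mulrDr.
under eq_bigr do rewrite big_split /=.
by rewrite big_split /= !sum2_point tens2E; ring.
Qed.

Lemma sym_frame_of_T4 c2 : (forall i j a b, 2%:R * T4 i j a b = c2 * sym_delta i j a b) ->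
  forall V, symsub V -> \sum_m ipm q (tens2 (x m)) V *: tens2 (x m) = c2 *: V.
Proof.
move=> T4E V /eqP symV; apply/matrixP => i j.
apply: (mulfI two_neq0); rewrite sum_scale_entry mxE.
transitivity (\sum_a \sum_b V a b * (2%:R * T4 i j a b)).
  transitivity (\sum_m \sum_a \sum_b
      V a b * (2%:R * (x m i 0 * x m j 0 * (cj (x m a 0) * cj (x m b 0))))).
    rewrite mulr_sumr; apply: eq_bigr => m _.
    rewrite ipm_tens2 tens2E big_distrl mulr_sumr /=; apply: eq_bigr => a _.
    by rewrite big_distrl mulr_sumr /=; apply: eq_bigr => b _; ring.
  rewrite exchange_big /=; apply: eq_bigr => a _.
  by rewrite exchange_big /=; apply: eq_bigr => b _; rewrite /T4 !mulr_sumr.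
under eq_bigr do under eq_bigr do rewrite T4E /sym_delta.
transitivity (c2 * (\sum_a \sum_b V a b * ((a == i)%:R * (b == j)%:R)
   + \sum_a \sum_b V a b * ((a == j)%:R * (b == i)%:R))).
  rewrite -big_split mulr_sumr /=; apply: eq_bigr => a _.
  rewrite -big_split mulr_sumr /=; apply: eq_bigr => b _.
  by rewrite [i == a]eq_sym [j == b]eq_sym [i == b]eq_sym [j == a]eq_sym; ring.
by rewrite !sum2_point -{2}symV mxE; ring.
Qed.

Lemma Phi_of_design c2 :
  tight_frame q (@ipm L q d) (@symsub L d) (fun k => tens2 (x k)) c2 ->
  forall M, Phi M = Psi (c2 / 2%:R) M.
Proof.
case=> _ _ _ frame M; apply: (@scalerI _ _ (2%:R : L) two_neq0).
by rewrite (Phi_of_T4 (T4_of_sym_frame frame)) /Psi scalerA mulrC divfK ?two_neq0.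
Qed.

Lemma design_of_Phi h : h != 0 -> inFq q h -> (forall M, Phi M = Psi h M) ->
  tight_frame q (@ipm L q d) (@symsub L d) (fun k => tens2 (x k)) (2%:R * h).
Proof.
move=> h0 hFq PhiE.
have c20 : 2%:R * h != 0 by rewrite mulf_eq0 negb_or two_neq0.
have PhiE2 M : 2%:R *: Phi M = (2%:R * h) *: (M + \tr M *: 1%:M).
  by rewrite PhiE /Psi scalerA.
have frame := sym_frame_of_T4 (T4_of_Phi PhiE2).
split => //.
- exact: inFqM (inFq_nat 2) hFq.
- by move=> k; rewrite /symsub /tens2 trmx_mul trmxK.
- move=> V; split.
    move=> symV; exists (fun m => (2%:R * h)^-1 * ipm q (tens2 (x m)) V).
    under eq_bigr do rewrite -scalerA.
    by rewrite -scaler_sumr frame // scalerA mulVf // scale1r.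
  move=> [coef ->]; rewrite /symsub linear_sum /=; apply/eqP; apply: eq_bigr => m _.
  by rewrite linearZ /= /tens2 trmx_mul trmxK.
Qed.

Definition Qf (m0 : 'I_n) (m : 'I_n) : 'M[L]_d := if m == m0 then 1%:M else Pr m.

(* Pr l = 0 only for x l = 0, since a^q a = 0 forces a = 0. *)
Lemma Pr_eq0 l : Pr l = 0 -> x l = 0.
Proof.
move=> Pl0; apply/matrixP => i j; rewrite (ord1 j) mxE.
have := congr1 (fun M : 'M_d => M i i) Pl0; rewrite !mxE => /eqP.
by rewrite mulf_eq0 qconj_eq0 orbb => /eqP.
Qed.

Lemma frame_has_nonzero c : (0 < d)%N -> tight_frame q (@ipv L q d) predT x c ->
  exists l, x l != 0.
Proof.
move=> d_gt0 [_ _ span _]; apply/existsP; apply: contraT; rewrite negb_exists.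
move=> /forallP /= x0; have [coef e0E] := (span (delta_mx (Ordinal d_gt0) 0)).1 isT.
have : delta_mx (Ordinal d_gt0) 0 = 0 :> 'cV[L]_d.
  by rewrite e0E big1 // => k _; move: (x0 k); rewrite negbK => /eqP ->; rewrite scaler0.
by move/matrixP/(_ (Ordinal d_gt0) 0); rewrite !mxE !eqxx => /eqP; rewrite oner_eq0.
Qed.

Lemma tr_sum_Pr a c1 : (forall k, \tr (Pr k) = a) -> \sum_k Pr k = c1 *: 1%:M ->
  a *+ n = c1 * d%:R.
Proof.
move=> trPr sumPr; have := congr1 mxtrace sumPr.
by rewrite mxtraceZ mxtrace1 raddf_sum /=; under eq_bigr do rewrite trPr; rewrite sumr_const card_ord.
Qed.

Section Gram.
Variables (a b h c1 : L).
Hypothesis tr_Pr_a : forall k, \tr (Pr k) = a.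
Hypothesis gram : forall k l, \tr (Pr k *m Pr l) = h * (k == l)%:R + b.

Lemma dual_Pr : a != 0 -> h != 0 -> dual_family Pr.
Proof.
move=> a0 h0; exists (fun j => h^-1 *: (Pr j - (b / a) *: 1%:M)) => i j.
rewrite -scalemxAr mxtraceZ mulmxBr linearB /= gram.
by rewrite -scalemxAr mulmx1 mxtraceZ tr_Pr_a; field; rewrite h0 a0.
Qed.

(* If a = 0, then Pr sums to a trace-free matrix and the identity must
   replace one member to obtain a family with a dual family. *)
Lemma dual_Qf m0 : a = 0 -> h = - b -> b != 0 -> (d%:R : L) != 0 ->
  dual_family (Qf m0).
Proof.
move=> a0 hb b0 d0.
exists (fun m => if m == m0 then (d%:R)^-1 *: 1%:M else b^-1 *: (Pr m0 - Pr m)).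
move=> i j; rewrite /Qf.
case: (eqVneq i m0) => [ei|im]; case: (eqVneq j m0) => [ej|jm].
- by rewrite ei ej eqxx mul1mx mxtraceZ mxtrace1 mulVf.
- rewrite mul1mx mxtraceZ linearB /= !tr_Pr_a subrr mulr0.
  by rewrite ei eq_sym (negbTE jm).
- by rewrite -scalemxAr mulmx1 mxtraceZ tr_Pr_a a0 mulr0 ej (negbTE im).
- rewrite -scalemxAr mxtraceZ mulmxBr linearB /= !gram (negbTE im) hb.
  by rewrite mulr0 add0r; field.
Qed.

Hypothesis sum_Pr : \sum_k Pr k = c1 *: 1%:M.

Lemma Phi_Pr_gram l : Phi (Pr l) = h *: Pr l + (b * c1) *: 1%:M.
Proof.
rewrite /Phi; under eq_bigr do rewrite gram scalerDl.
rewrite big_split /= -scaler_sumr sum_Pr scalerA.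
rewrite (bigD1 l) //= eqxx mulr1 big1 ?addr0 //.
by move=> m /negbTE ml; rewrite ml mulr0 scale0r.
Qed.

Lemma Phi1_gram : Phi 1%:M = (a * c1) *: 1%:M.
Proof. by rewrite Phi1; under eq_bigr do rewrite tr_Pr_a; rewrite -scaler_sumr sum_Pr scalerA. Qed.

End Gram.

Section DesignSpanning.
Variables (a h c1 : L).
Hypotheses (h0 : h != 0) (PhiE : forall M, Phi M = Psi h M).
Hypothesis sum_Pr : \sum_k Pr k = c1 *: 1%:M.

(* When d + 1 is invertible, so is Psi h, and M = Phi (Psi h^-1 M)
   expands M along Pr. *)
Lemma spans_Pr : (d.+1)%:R != 0 :> L -> spans Pr.
Proof.
move=> d1; exists (fun M m => \tr (Pr m *m (h^-1 *: (M - (\tr M / (d.+1)%:R) *: 1%:M)))).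
by move=> M; rewrite -/(Phi _) PhiE Psi_shift // divfK // subrr scale0r addr0.
Qed.

(* When d + 1 = 0 and the Pr sum to 0, Psi h only reaches M up to a multiple
   of I, which the identity member of Qf supplies. *)
Lemma spans_Qf m0 : (d.+1)%:R = 0 :> L -> c1 = 0 -> spans (Qf m0).
Proof.
move=> d1 c10.
pose t M m := \tr (Pr m *m (h^-1 *: (M - (- \tr M) *: 1%:M))).
exists (fun M m => if m == m0 then - \tr M else t M m - t M m0) => M.
have PhiM : \sum_m (t M m - t M m0) *: Pr m = M - (- \tr M) *: 1%:M.
  under eq_bigr do rewrite scalerBl.
  rewrite sumrB -scaler_sumr sum_Pr c10 scale0r scaler0 subr0.
  transitivity (Phi (h^-1 *: (M - (- \tr M) *: 1%:M))); first by [].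
  by rewrite PhiE Psi_shift // d1 mulr0 subr0 scaleNr opprK.
rewrite (bigD1 m0) //= /Qf eqxx.
have -> : \sum_(m | m != m0) (if m == m0 then - \tr M else t M m - t M m0) *:
           (if m == m0 then 1%:M else Pr m) = \sum_m (t M m - t M m0) *: Pr m.
  rewrite [RHS](bigD1 m0) //= subrr scale0r add0r.
  by apply: eq_bigr => m /negbTE ->.
by rewrite PhiM addrC subrK.
Qed.

Hypothesis tr_Pr_a : forall k, \tr (Pr k) = a.
Hypothesis nd : n = (d * d)%N.

(* When d + 1 is invertible, Pr is a basis, so its sum c1 I is nonzero. *)
Lemma design_c1_neq0 (k : 'I_n) : (d.+1)%:R != 0 :> L -> c1 != 0.
Proof.
move=> d1; apply: contraTneq isT => c0.
have sum1 : \sum_m (fun _ : 'I_n => 1 : L) m *: Pr m = 0.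
  by under eq_bigr do rewrite scale1r; rewrite sum_Pr c0 scale0r.
by have /eqP := coef_eq0_of_spans nd (spans_Pr d1) sum1 k; rewrite oner_eq0.
Qed.

(* When Pr is a basis, comparing Phi (Pr l) = Psi h (Pr l) with the
   expansion of Phi (Pr l) determines the Gram matrix of the Pr. *)
Lemma gram_of_design_Pr : (d.+1)%:R != 0 :> L ->
  forall k l, \tr (Pr k *m Pr l) = h * (k == l)%:R + h * a / c1.
Proof.
move=> d1 k l; have indep := coef_eq0_of_spans nd (spans_Pr d1).
have c10 := design_c1_neq0 k d1; set b := h * a / c1.
suff /(_ k) /eqP : forall m, \tr (Pr m *m Pr l) - h * (m == l)%:R - b = 0.
  by rewrite subr_eq0 subr_eq => /eqP ->; rewrite addrC.
apply: indep; under eq_bigr do rewrite !scalerBl.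
rewrite !sumrB -/(Phi _) PhiE -scaler_sumr sum_Pr /Psi tr_Pr_a.
rewrite (bigD1 l) //= eqxx mulr1 big1 ?addr0; last by move=> m /negbTE ->; rewrite mulr0 scale0r.
by rewrite scalerA /b divfK // scalerDr scalerA addrAC addrK subrr.
Qed.

(* When d + 1 = 0, the Pr sum to 0 and have trace 0, Qf is a basis and
   the same comparison gives the Gram matrix h delta - h. *)
Lemma gram_of_design_Qf (m0 : 'I_n) : (d.+1)%:R = 0 :> L -> c1 = 0 -> a = 0 ->
  forall k l, \tr (Pr k *m Pr l) = h * (k == l)%:R - h.
Proof.
move=> d1 c10 a0 k l; have indep := coef_eq0_of_spans nd (spans_Qf m0 d1 c10).
pose r m := \tr (Pr m *m Pr l) - h * (m == l)%:R.
have sum_r : \sum_m r m *: Pr m = 0.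
  rewrite /r; under eq_bigr do rewrite scalerBl.
  rewrite sumrB -/(Phi _) PhiE /Psi tr_Pr_a a0 scale0r addr0.
  rewrite (bigD1 l) //= eqxx mulr1 big1 ?addr0 ?subrr //.
  by move=> m /negbTE ->; rewrite mulr0 scale0r.
have sum_rQ : \sum_m (r m - r m0) *: Qf m0 m = 0.
  transitivity (\sum_m (r m - r m0) *: Pr m).
    by apply: eq_bigr => m _; rewrite /Qf; case: eqP => [->|//]; rewrite subrr !scale0r.
  under eq_bigr do rewrite scalerBl.
  by rewrite sumrB sum_r -scaler_sumr sum_Pr c10 scale0r scaler0 subrr.
have r_const m : r m = r m0 by apply/eqP; rewrite -subr_eq0; apply/eqP; exact: indep sum_rQ m.
have rl : r l = - h by rewrite /r tr_PrPr -tr_Pr tr_Pr_a a0 mulr0 eqxx mulr1 sub0r.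
by have /eqP := r_const k; rewrite -(r_const l) rl /r subr_eq => /eqP ->; rewrite addrC.
Qed.

End DesignSpanning.

Lemma ipm_lincombr (A : 'M[L]_d) (c : 'I_n -> L) (Y : 'I_n -> 'M[L]_d) :
  ipm q A (\sum_m c m *: Y m) = \sum_m c m * ipm q A (Y m).
Proof.
rewrite /ipm; under eq_bigr do under eq_bigr do rewrite sum_scale_entry mulr_sumr.
under eq_bigr do rewrite exchange_big /=.
rewrite exchange_big /=; apply: eq_bigr => m _; rewrite mulr_sumr.
by apply: eq_bigr => i _; rewrite mulr_sumr; apply: eq_bigr => j _; ring.
Qed.

Lemma ipm_conj (A B : 'M[L]_d) : cj (ipm q A B) = ipm q B A.
Proof.
rewrite /ipm qconj_sum; apply: eq_bigr => i _; rewrite qconj_sum.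
by apply: eq_bigr => j _; rewrite qconjM qconjK mulrC.
Qed.

(* The symmetric tensors e_a (x) e_b + e_b (x) e_a, a <= b, form an
   orthogonal basis of the symmetric subspace. *)
Definition sym_pair : Type := {p : 'I_d * 'I_d | (p.1 <= p.2)%N}.

Definition Bsym (s : sym_pair) : 'M[L]_d :=
  delta_mx (val s).1 (val s).2 + delta_mx (val s).2 (val s).1.

Lemma Bsym_sym s : symsub (Bsym s).
Proof. by rewrite /symsub /Bsym linearD /= !trmx_delta addrC. Qed.

Lemma sym_pair_swap (s t : sym_pair) :
  ((val s).1 == (val t).2) && ((val s).2 == (val t).1) = (s == t) && ((val t).1 == (val t).2).
Proof.
case: s t => [[s1 s2] /= s12] [[t1 t2] /= t12].
have -> : (exist _ (s1, s2) s12 == exist _ (t1, t2) t12 :> sym_pair) =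
  (s1 == t1) && (s2 == t2) by [].
apply/andP/andP => [[/eqP e1 /eqP e2]|[/andP [/eqP e1 /eqP e2] /eqP et]].
  have e12 : s1 = s2 by apply/ord_inj/eqP; rewrite eqn_leq s12 e1 e2 t12.
  by rewrite -e1 -e2 e12 !eqxx.
by rewrite e1 e2 et !eqxx.
Qed.

Lemma Bsym_entry (s t : sym_pair) : Bsym t (val s).1 (val s).2 =
  (s == t)%:R * (1 + ((val t).1 == (val t).2))%:R.
Proof.
rewrite /Bsym !mxE -natrD -natrM sym_pair_swap; congr _%:R.
have -> : ((val s).1 == (val t).1) && ((val s).2 == (val t).2) = (s == t).
  by case: s t => [[s1 s2] s12] [[t1 t2] t12].
by case: (s == t); case: (_ == _).
Qed.

Lemma ipm_delta a b (B : 'M[L]_d) : ipm q (delta_mx a b) B = B a b.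
Proof.
rewrite -(sum2_point B a b); apply: eq_bigr => i _; apply: eq_bigr => j _.
by rewrite delta_mxE qconjM !qconj_nat mulrC.
Qed.

Lemma ipmDl (A A' B : 'M[L]_d) : ipm q (A + A') B = ipm q A B + ipm q A' B.
Proof.
rewrite /ipm -big_split; apply: eq_bigr => i _ /=.
by rewrite -big_split; apply: eq_bigr => j _ /=; rewrite mxE qconjD mulrDl.
Qed.

Lemma ipm_Bsym s t : ipm q (Bsym s) (Bsym t) =
  (s == t)%:R * (2 * (1 + ((val t).1 == (val t).2)))%:R.
Proof.
have symt : Bsym t (val s).2 (val s).1 = Bsym t (val s).1 (val s).2.
  have /eqP symBt : (Bsym t)^T == Bsym t := Bsym_sym t.
  by rewrite -{1}symBt mxE.
by rewrite ipmDl !ipm_delta symt Bsym_entry natrM; ring.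
Qed.

Lemma ipm_Bsym_neq0 t : ipm q (Bsym t) (Bsym t) != 0.
Proof.
rewrite ipm_Bsym eqxx mul1r natrM mulf_eq0 negb_or two_neq0 /=.
by case: (_.1 == _.2); [exact: two_neq0 | rewrite oner_eq0].
Qed.

Lemma card_sym_pair_double : (0 < d)%N ->
  (d * d < #|{: sym_pair}| + #|{: sym_pair}|)%N.
Proof.
move=> d_gt0; rewrite card_sig.
set A := [pred p : 'I_d * 'I_d | (p.1 <= p.2)%N].
set A' := [pred p : 'I_d * 'I_d | (p.2 <= p.1)%N].
have cardA' : #|A'| = #|A|.
  rewrite -!sum1_card (reindex_inj (h := fun p : 'I_d * 'I_d => (p.2, p.1))) //.
  by move=> [? ?] [? ?] [-> ->].
rewrite -{2}cardA' -cardUI.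
have -> : #|[predU A & A']| = (d * d)%N.
  rewrite -card_pairs; apply: eq_card => p; rewrite !inE /=; exact: leq_total.
rewrite -addn1 leq_add2l.
by apply/card_gt0P; exists (Ordinal d_gt0, Ordinal d_gt0); rewrite !inE /= leqnn.
Qed.

(* If the squares span the symmetric tensors but have zero frame operator,
   then the coefficient vectors of the basis Bsym and the vectors of its
   pairings with the squares are 2 #|sym_pair| independent vectors of L^n. *)
Lemma card_of_isotropic_squares :
  (forall V, symsub V -> exists coef : 'I_n -> L, V = \sum_m coef m *: tens2 (x m)) ->
  (forall V, symsub V -> \sum_m ipm q (tens2 (x m)) V *: tens2 (x m) = 0) ->
  (#|{: sym_pair}| + #|{: sym_pair}| <= n)%N.
Proof.
move=> span frame0.
have [v vE] := fin_all_exists (fun s : sym_pair => span _ (Bsym_sym s)).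
pose y m := tens2 (x m); pose g t := ipm q (Bsym t) (Bsym t).
have ipmB s t : ipm q (Bsym s) (Bsym t) = (s == t)%:R * g t.
  by rewrite /g !ipm_Bsym eqxx mul1r; case: (s == t); rewrite ?mul1r ?mul0r.
rewrite -[n]card_ord; apply: (@card_le_of_isotropic_pairing _ _ _
  (fun s m => ipm q (y m) (Bsym s)) v (fun t m => ipm q (Bsym t) (y m) / g t)
  (fun t m => cj (v t m) / cj (g t))) => s t.
- under eq_bigr do rewrite mulrA; rewrite -mulr_suml -ipm_lincombr frame0 ?Bsym_sym //.
  by rewrite /ipm big1 ?mul0r // => i _; rewrite big1 // => j _; rewrite !mxE mulr0.
- under eq_bigr do rewrite mulrA; rewrite -mulr_suml -ipm_lincombr -vE ipmB eq_sym.
  by case: (eqVneq s t) => [->|st]; rewrite ?mul0r // mul1r mulfV ?ipm_Bsym_neq0.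
- transitivity (cj (\sum_m v t m * ipm q (Bsym s) (y m)) / cj (g t)).
    rewrite [cj (\sum_m v t m * _)]qconj_sum mulr_suml; apply: eq_bigr => m _.
    by rewrite qconjM ipm_conj; ring.
  rewrite -ipm_lincombr -vE ipmB qconjM qconj_nat.
  by rewrite mulfK // qconj_eq0 ipm_Bsym_neq0.
Qed.

Lemma design_c2_neq0 c2 : (0 < d)%N -> n = (d * d)%N ->
  tight_frame q (@ipm L q d) (@symsub L d) (fun k => tens2 (x k)) c2 -> c2 != 0.
Proof.
move=> d_gt0 nd [_ _ span frame]; apply: contraTneq isT => c20.
have frame0 V : symsub V -> \sum_m ipm q (tens2 (x m)) V *: tens2 (x m) = 0.
  by move=> symV; rewrite frame // c20 scale0r.
have := card_of_isotropic_squares (fun V symV => (span V).1 symV) frame0.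
by rewrite leqNgt nd card_sym_pair_double.
Qed.

Lemma etf_gram a b c1 : etf q a b c1 x ->
  forall k l, \tr (Pr k *m Pr l) = (a ^+ 2 - b) * (k == l)%:R + b.
Proof.
case=> _ _ _ norm equi k l; rewrite tr_PrPr.
case: eqVneq => [<-|kl]; last by rewrite equi // mulr0 add0r.
by rewrite norm mulr1 expr2 subrK.
Qed.

Lemma etf_of_gram a b c1 : inFq q a -> inFq q b ->
  tight_frame q (@ipv L q d) predT x c1 -> (forall k, ipv q (x k) (x k) = a) ->
  (forall k l, \tr (Pr k *m Pr l) = (a ^+ 2 - b) * (k == l)%:R + b) ->
  etf q a b c1 x.
Proof.
move=> aFq bFq frame norm gram; split=> // k l kl.
by rewrite -tr_PrPr gram (negbTE kl) mulr0 add0r.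
Qed.

Section ConditionC.
Variables (a b c1 : L).
Hypothesis hC : condC q a b c1 x.

Lemma condC_tr_Pr k : \tr (Pr k) = a.
Proof. by case: hC => _ _ _ _ [_ _ _ norm _]; rewrite tr_Pr norm. Qed.

Lemma condC_sum_Pr : \sum_k Pr k = c1 *: 1%:M.
Proof. by case: hC => _ _ _ _ [_ _ frame _ _]; exact: sum_Pr_of_frame. Qed.

Lemma condC_gram k l : \tr (Pr k *m Pr l) = (a ^+ 2 - b) * (k == l)%:R + b.
Proof. by case: hC => _ _ _ _ /etf_gram; apply. Qed.

(* If a = 0 then d = -1 in L, so d != 0 and tr (\sum_k Pr k) = c1 d forces c1 = 0. *)
Lemma condC_a0 : a = 0 -> (d%:R : L) != 0 /\ c1 = 0.
Proof.
move=> a0; case: hC => _ _ _ /(_ a0) d1 _.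
have d0 : (d%:R : L) != 0.
  by apply: contraTneq isT => d0; move: d1; rewrite -natr1 d0 add0r => /eqP; rewrite oner_eq0.
split=> //; have := tr_sum_Pr condC_tr_Pr condC_sum_Pr.
by rewrite a0 mul0rn => /esym/eqP; rewrite mulf_eq0 (negbTE d0) orbF => /eqP.
Qed.

Lemma condC_ratio : b * c1 = (a ^+ 2 - b) * a.
Proof.
have [a0|a0] := eqVneq a 0; first by have [_ ->] := condC_a0 a0; rewrite a0 !mulr0.
by case: hC => _ _ /(_ a0) -> _ _; rewrite divfK.
Qed.

Lemma Phi_Pr_condC l : Phi (Pr l) = Psi (a ^+ 2 - b) (Pr l).
Proof.
rewrite (Phi_Pr_gram condC_gram condC_sum_Pr) condC_ratio /Psi condC_tr_Pr.
by rewrite scalerDr scalerA.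
Qed.

Lemma condC_dual_family : exists Q : 'I_n -> 'M[L]_d,
  dual_family Q /\ forall m, Phi (Q m) = Psi (a ^+ 2 - b) (Q m).
Proof.
have h0 : a ^+ 2 - b != 0 by case: hC => _ ab _ _ _; rewrite subr_eq0.
have [a0|a0] := eqVneq a 0; last first.
  exists Pr; split; last exact: Phi_Pr_condC.
  exact: dual_Pr condC_tr_Pr condC_gram a0 h0.
have [d0 c10] := condC_a0 a0.
have d_gt0 : (0 < d)%N by rewrite lt0n; apply: contraNneq d0 => ->.
have [m0 _] : exists m0 : 'I_n, True.
  case: hC => _ _ _ _ [_ _ frame _ _].
  by have [l _] := frame_has_nonzero d_gt0 frame; exists l.
have hb : a ^+ 2 - b = - b by rewrite a0 expr0n /= sub0r.
have b0 : b != 0 by rewrite -oppr_eq0 -hb.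
exists (Qf m0); split; first exact: dual_Qf condC_tr_Pr condC_gram m0 a0 hb b0 d0.
move=> m; rewrite /Qf; case: eqP => _; last exact: Phi_Pr_condC.
have d1 : (d.+1)%:R = 0 :> L by case: hC => _ _ _ /(_ a0).
by rewrite (Phi1_gram condC_tr_Pr condC_sum_Pr) Psi1 a0 d1 mul0r mulr0.
Qed.

End ConditionC.

(* (b) and (c) imply (a), with c2 = 2 (a^2 - b): the dual family of (c) is a
   basis, so Phi = Psi (a^2 - b) everywhere. *)
Lemma design_of_condC a b c1 : n = (d * d)%N -> condC q a b c1 x ->
  proj2design q a c1 (2%:R * (a ^+ 2 - b)) x.
Proof.
move=> nd hC; have [Q [dualQ PhiQ]] := condC_dual_family hC.
have PhiE := Phi_eq_Psi_of_spans (spans_of_dual_family nd dualQ) PhiQ.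
case: hC => [[aFq [bFq _]] ab _ _ [_ _ frame norm _]].
split=> //; apply: design_of_Phi PhiE; first by rewrite subr_eq0.
by apply: inFqB bFq; rewrite expr2; exact: inFqM.
Qed.

(* (a) and (c) imply (b): the dual family of (c) bounds n by d^2, and the
   design makes Pr (or Qf when a = 0) span 'M_d. *)
Lemma card_of_design_condC a' c1' c2 a b c1 :
  proj2design q a' c1' c2 x -> condC q a b c1 x -> n = (d * d)%N.
Proof.
move=> [_ _ _ design] hC; apply/eqP; rewrite eqn_leq.
have [Q [dualQ _]] := condC_dual_family hC.
rewrite (card_le_of_dual_family dualQ) /=; case: (posnP d) => [-> //|d_gt0].
have PhiE := Phi_of_design design; set h' := c2 / 2%:R in PhiE.
have sumPr := condC_sum_Pr hC; have trPr := condC_tr_Pr hC.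
have h0 : a ^+ 2 - b != 0 by case: hC => _ ab _ _ _; rewrite subr_eq0.
have [a0|a0] := eqVneq a 0.
  have [_ c10] := condC_a0 hC a0.
  have d1 : (d.+1)%:R = 0 :> L by case: hC => _ _ _ /(_ a0).
  have [l xl] : exists l, x l != 0.
    by case: hC => _ _ _ _ [_ _ frame _ _]; exact: frame_has_nonzero frame.
  have PhiPrl := Phi_Pr_condC hC l; subst a.
  have h'0 : h' != 0.
    apply: contraTneq xl => h'0; rewrite negbK; apply/eqP/Pr_eq0/eqP.
    move: PhiPrl; rewrite PhiE h'0 /Psi trPr !scale0r addr0.
    by move=> /esym/eqP; rewrite scaler_eq0 (negbTE h0).
  exact: card_ge_of_spans (spans_Qf h'0 PhiE sumPr l d1 c10).
have c10 : c1 != 0.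
  by case: hC => _ _ /(_ a0) ratio _ _; apply: contraNneq h0 => c10; rewrite ratio c10 mulr0 mul0r.
have : (a * c1) *: (1%:M : 'M[L]_d) = (h' * (d.+1)%:R) *: 1%:M.
  by rewrite -(Phi1_gram trPr sumPr) -Psi1 PhiE.
move=> /(scalar1_inj d_gt0) ac1.
have : h' * (d.+1)%:R != 0 by rewrite -ac1 mulf_neq0.
rewrite mulf_eq0 negb_or => /andP [h'0 d1].
exact: card_ge_of_spans (spans_Pr h'0 PhiE d1).
Qed.

Lemma condC_dim0 : d = 0%N -> n = 0%N -> exists a b c1 : L, condC q a b c1 x.
Proof.
move=> d0 n0; have vec0 (w : 'cV[L]_d) : w = 0.
  by apply/matrixP => i j; have := ltn_ord i; rewrite {2}d0.
have no_k (k : 'I_n) : False by have := ltn_ord k; rewrite {2}n0.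
have one_Fq : inFq q (1 : L) := inFq_nat 1.
exists 1, (-1), (- 2%:R); split.
- by split=> //; split; apply: inFqN => //; exact: inFq_nat.
- by rewrite expr1n -subr_eq0 opprK -mulr2n two_neq0.
- by move=> _; rewrite expr1n opprK mulN1r opprK divr1 -mulr2n.
- by move=> /eqP; rewrite oner_eq0.
split=> //; first by apply: inFqN.
- split=> //; first by apply: inFqN; exact: inFq_nat.
  + by move=> w; split=> // _; exists (fun _ => 0); rewrite (vec0 w) (vec0 (\sum_k _)).
  + by move=> w _; rewrite (vec0 w) (vec0 (\sum_k _)) (vec0 (_ *: _)).
Qed.

(* If d + 1 = 0 in L and n = d^2, then n = 1 in L; the trace of
   \sum_k Pr k = c1 I then gives a = -c1, so a c1 = 0 forces a = c1 = 0. *)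
Lemma params_eq0_of_dplus1_eq0 a c1 : (d.+1)%:R = 0 :> L -> n = (d * d)%N ->
  (forall k, \tr (Pr k) = a) -> \sum_k Pr k = c1 *: 1%:M -> a * c1 = 0 ->
  a = 0 /\ c1 = 0.
Proof.
move=> d1 nd trPr sumPr ac1.
have dm1 : (d%:R : L) = -1 by apply/eqP; rewrite -addr_eq0 natr1 d1.
have n1 : (n%:R : L) = 1 by rewrite nd natrM dm1 mulrNN mulr1.
have := tr_sum_Pr trPr sumPr; rewrite -[a *+ n]mulr_natr n1 dm1 mulr1 mulrN1 => ac.
have a0 : a = 0 by apply/eqP; rewrite -sqrf_eq0 expr2 {2}ac mulrN ac1 oppr0.
by split=> //; move: ac; rewrite a0 => /esym/eqP; rewrite oppr_eq0 => /eqP.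
Qed.

(* (a) and (b) imply (c): the squares force c2 != 0, so Pr (or Qf) is a basis
   of 'M_d and comparing Phi with Psi (c2 / 2) on it yields the Gram
   relations of an equiangular tight frame. *)
Lemma condC_of_design a c1 c2 : n = (d * d)%N -> proj2design q a c1 c2 x ->
  exists a b c1 : L, condC q a b c1 x.
Proof.
move=> nd [aFq norm frame design].
case: (posnP d) => [d0|d_gt0]; first by apply: condC_dim0; rewrite // nd d0.
have n_gt0 : (0 < n)%N by rewrite nd muln_gt0 d_gt0.
pose m0 := Ordinal n_gt0.
have PhiE := Phi_of_design design; set h := c2 / 2%:R in PhiE.
have h0 : h != 0 by rewrite mulf_neq0 ?invr_eq0 ?two_neq0 // (design_c2_neq0 d_gt0 nd design).
have hFq : inFq q h by case: design => c2Fq _ _ _; apply: inFqM c2Fq (inFqV (inFq_nat 2)).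
have c1Fq : inFq q c1 by case: frame.
have sumPr := sum_Pr_of_frame frame.
have trPr k : \tr (Pr k) = a by rewrite tr_Pr norm.
have [d1|d1] := eqVneq ((d.+1)%:R : L) 0.
  have ac1 : a * c1 = 0.
    by apply: (scalar1_inj d_gt0); rewrite -(Phi1_gram trPr sumPr) PhiE Psi1 d1 mulr0.
  have [a0 c10] := params_eq0_of_dplus1_eq0 d1 nd trPr sumPr ac1.
  have gram := gram_of_design_Qf h0 PhiE sumPr trPr nd m0 d1 c10 a0.
  exists a, (- h), c1; split.
  - by split=> //; split=> //; exact: inFqN.
  - by rewrite a0 expr0n /= eq_sym oppr_eq0.
  - by rewrite a0 eqxx.
  - by [].
  apply: etf_of_gram => //; first exact: inFqN.
  by move=> k l; rewrite gram a0 expr0n /= sub0r opprK.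
have c10 := design_c1_neq0 h0 PhiE sumPr nd m0 d1.
have gram := gram_of_design_Pr h0 PhiE sumPr trPr nd d1.
set b := h * a / c1 in gram.
have bFq : inFq q b by apply: inFqM (inFqV c1Fq); exact: inFqM.
have hab : a ^+ 2 - b = h.
  by have := gram m0 m0; rewrite tr_PrPr norm eqxx mulr1 -expr2 => ->; rewrite addrK.
exists a, b, c1; split => //.
- by rewrite -subr_eq0 hab.
- by move=> a0; rewrite hab /b; field; rewrite a0 c10.
- by move=> a0; move: h0; rewrite -hab /b a0 mulr0 mul0r expr0n /= subr0 eqxx.
by apply: etf_of_gram => // k l; rewrite gram hab.
Qed.

End FrameOperator.
End FiniteField.

Theorem mainTheorem10 (q : nat) (L : finFieldType) (d n : nat)
    (x : 'I_n -> 'cV[L]_d) :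
  #|L| = (q ^ 2)%N -> odd q ->
  let A := exists a c1 c2 : L, proj2design q a c1 c2 x in
  let B := n = (d ^ 2)%N in
  let C := exists a b c1 : L, condC q a b c1 x in
  [/\ (A -> B -> C), (A -> C -> B), (B -> C -> A)
    & (forall a b c1 : L, A -> B -> condC q a b c1 x ->
         proj2design q a c1 (2 * (a ^+ 2 - b)) x)].
Proof.
move=> cardL odd_q A B C; have nd : B -> n = (d * d)%N by rewrite /B mulnn.
split.
- move=> [a [c1 [c2 hA]]] /nd nd'; exact (condC_of_design cardL odd_q nd' hA).
- move=> [a' [c1' [c2 hA]]] [a [b [c1 hC]]]; rewrite /B -mulnn.
  exact (card_of_design_condC cardL odd_q hA hC).
- move=> /nd nd' [a [b [c1 hC]]]; exists a, c1, (2 * (a ^+ 2 - b)).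
  exact (design_of_condC cardL odd_q nd' hC).
- move=> a b c1 _ /nd nd' hC; exact (design_of_condC cardL odd_q nd' hC).
Qed.
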